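(* Let $S$ be a numerical semigroup with minimal generators $e<a_1<\dots<a_t$. For every $s\in S$, ${\rm d}_{\max}(s;S)$ equals the number of $B^{\mathcal D}$-factorizations of ${\rm adj}(s)$ of length at most ${\rm ord}(s;S)$.
   Context: A numerical semigroup is a submonoid of $(\mathbb N,+)$ with finite complement. An $S$-factorization of $n$ is $(c_0,\dots,c_t)\in\mathbb N^{t+1}$ with $c_0e+\sum c_ia_i=n$, of length $\sum c_i$. ${\rm ord}(n;S)$ is the maximal such length, and ${\rm d}_{\max}(n;S)$ is the number of $S$-factorizations of $n$ of length ${\rm ord}(n;S)$. Let $d_i=a_i-e$, $B=\langle e,d_1,\dots,d_t\rangle$, $\mathcal D=(e,d_1,\dots,d_t)$. A $B^{\mathcal D}$-factorization of $b$ is $(x_0,\dots,x_t)\in\mathbb N^{t+1}$ with $x_0e+\sum x_id_i=b$, of length $\sum x_i$. The adjustment is ${\rm adj}(s)=s-{\rm ord}(s;S)e$. *)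

From mathcomp Require Import all_boot all_order.
Set Implicit Arguments. Unset Strict Implicit. Unset Printing Implicit Defensive.

(* A generator list is g : 'I_k -> nat.  For S = <e, a_1, ..., a_t> we use
   k = t.+1, g ord0 = e, g (i+1) = a_i. *)

Definition in_sg (k : nat) (g : 'I_k -> nat) (n : nat) : Prop :=
  exists c : 'I_k -> nat, \sum_(i < k) c i * g i = n.

(* Entries are stored in 'I_n.+1; when all g i >= 1 every factorization has
   entries <= n, so this is exactly the set of all factorizations. *)
Definition facts (k : nat) (g : 'I_k -> nat) (n : nat)
  : {set {ffun 'I_k -> 'I_n.+1}} :=
  [set c : {ffun 'I_k -> 'I_n.+1} | \sum_(i < k) (c i : nat) * g i == n].

Definition flen (k n : nat) (c : {ffun 'I_k -> 'I_n.+1}) : nat :=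
  \sum_(i < k) (c i : nat).

Definition ordS (k : nat) (g : 'I_k -> nat) (n : nat) : nat :=
  \max_(c in facts g n) flen c.

Definition dmax (k : nat) (g : 'I_k -> nat) (n : nat) : nat :=
  #|[set c in facts g n | flen c == ordS g n]|.

Definition adj (t : nat) (g : 'I_t.+1 -> nat) (s : nat) : nat :=
  s - ordS g s * g ord0.

Definition Dgens (t : nat) (g : 'I_t.+1 -> nat) : 'I_t.+1 -> nat :=
  fun i => if i == ord0 then g ord0 else g i - g ord0.

Definition countBD (t : nat) (g : 'I_t.+1 -> nat) (s : nat) : nat :=
  #|[set x in facts (Dgens g) (adj g s) | flen x <= ordS g s]|.

Definition min_gens_numsg (t : nat) (g : 'I_t.+1 -> nat) : Prop :=
  [/\ 0 < g ord0,
      (forall i j : 'I_t.+1, i < j -> g i < g j),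
      (exists N, forall n, N <= n -> in_sg g n) &
      (forall i : 'I_t.+1,
          ~ exists c : 'I_t.+1 -> nat,
              c i = 0 /\ \sum_(j < t.+1) c j * g j = g i)].

(* Since a_i = e + d_i, a factorization c of s satisfies s = |c| e + sum_{i>=1} c_i d_i.
   If |c| = ord(s;S) =: L, then (0, c_1, ..., c_t) is a B^D-factorization of adj(s) of
   length at most L.  Conversely, a B^D-factorization x of adj(s) of length at most L
   gives the factorization (L + x_0 - sum_{i>=1} x_i, x_1, ..., x_t) of s, of length
   L + x_0; maximality of L forces x_0 = 0, and the two maps are mutually inverse. *)

From Pilot Require Import Defs.
From mathcomp Require Import all_boot all_order zify.

Set Implicit Arguments.
Unset Strict Implicit.
Unset Printing Implicit Defensive.

(* fintype's cyclic successor [ordS] would otherwise shadow [Defs.ordS]. *)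
Local Notation ordS := Defs.ordS.

(* [inord] truncates entries above [n]; entries of factorizations of [n] never are. *)
Definition ffun_of (k n : nat) (F : 'I_k -> nat) : {ffun 'I_k -> 'I_n.+1} :=
  [ffun i => inord (F i)].

Lemma ffun_ofE k n (F : 'I_k -> nat) i : F i <= n -> ffun_of n F i = F i :> nat.
Proof. by move=> le_Fn; rewrite ffunE inordK. Qed.

Section Factorizations.
Variables (k : nat) (g : 'I_k -> nat).
Hypothesis g_gt0 : forall i, 0 < g i.

Lemma fact_entry_le (F : 'I_k -> nat) n i : \sum_(j < k) F j * g j = n -> F i <= n.
Proof.
by move=> <-; rewrite (bigD1 i) //=; apply: leq_trans (leq_addr _ _); apply: leq_pmulr.
Qed.

Section OneFactorization.
Variables (F : 'I_k -> nat) (n : nat).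
Hypothesis F_fact : \sum_(i < k) F i * g i = n.

Lemma ffun_of_fact i : ffun_of n F i = F i :> nat.
Proof. exact/ffun_ofE/(fact_entry_le i F_fact). Qed.

Lemma ffun_of_facts : ffun_of n F \in facts g n.
Proof.
rewrite /facts inE; apply/eqP; rewrite -[RHS]F_fact.
by apply: eq_bigr => i _; rewrite ffun_of_fact.
Qed.

Lemma flen_ffun_of : flen (ffun_of n F) = \sum_(i < k) F i.
Proof. by apply: eq_bigr => i _; rewrite ffun_of_fact. Qed.

End OneFactorization.

Lemma flen_le_ordS n c : c \in facts g n -> flen c <= ordS g n.
Proof. by move=> c_fact; rewrite /ordS (bigmax_sup c). Qed.

End Factorizations.

Section Shift.
Variables (t : nat) (g : 'I_t.+1 -> nat).
Hypothesis e_gt0 : 0 < g ord0.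
Hypothesis e_lt_gen : forall j : 'I_t, g ord0 < g (lift ord0 j).
Local Notation e := (g ord0).

Lemma e_le_gen i : e <= g i.
Proof. by case: (unliftP ord0 i) => [j ->|->] //; apply: ltnW. Qed.

Lemma gen_gt0 i : 0 < g i.
Proof. exact: leq_trans e_gt0 (e_le_gen i). Qed.

Lemma Dgens_gt0 i : 0 < Dgens g i.
Proof.
by rewrite /Dgens; case: (unliftP ord0 i) => [j ->|->]; rewrite ?eqxx ?subn_gt0.
Qed.

Definition tail_sum (F : 'I_t.+1 -> nat) : nat := \sum_(j < t) F (lift ord0 j).

Definition dsum (F : 'I_t.+1 -> nat) : nat :=
  \sum_(j < t) F (lift ord0 j) * (g (lift ord0 j) - e).

Lemma eq_tail_sum (F G : 'I_t.+1 -> nat) : F =1 G -> tail_sum F = tail_sum G.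
Proof. by move=> eq_FG; apply: eq_bigr => j _; rewrite eq_FG. Qed.

Lemma sum_first_tail (F : 'I_t.+1 -> nat) : \sum_(i < t.+1) F i = F ord0 + tail_sum F.
Proof. exact: big_ord_recl. Qed.

Lemma sum_gensE (F : 'I_t.+1 -> nat) :
  \sum_(i < t.+1) F i * g i = (\sum_(i < t.+1) F i) * e + dsum F.
Proof.
rewrite !big_ord_recl mulnDl big_distrl /= -addnA -big_split /=; congr (_ + _).
by apply: eq_bigr => j _; rewrite -mulnDr subnKC // ltnW.
Qed.

Lemma sum_DgensE (F : 'I_t.+1 -> nat) :
  \sum_(i < t.+1) F i * Dgens g i = F ord0 * e + dsum F.
Proof. by rewrite big_ord_recl /Dgens eqxx. Qed.

Lemma ordS_mul_le s : ordS g s * e <= s.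
Proof.
rewrite -leq_divRL //; apply/bigmax_leqP => c; rewrite inE => /eqP c_fact.
rewrite leq_divRL // /flen big_distrl /=; apply: leq_trans (eq_leq c_fact).
by apply: leq_sum => i _; apply: leq_mul (leqnn _) (e_le_gen i).
Qed.

Lemma dsum_fact (F : 'I_t.+1 -> nat) n :
  \sum_(i < t.+1) F i * g i = n -> dsum F = n - (\sum_(i < t.+1) F i) * e.
Proof. by rewrite sum_gensE => <-; rewrite addKn. Qed.

Definition setfirst (F : 'I_t.+1 -> nat) (m : nat) : 'I_t.+1 -> nat :=
  fun i => if i == ord0 then m else F i.

Lemma setfirst_lift F m j : setfirst F m (lift ord0 j) = F (lift ord0 j).
Proof. by rewrite /setfirst eq_sym (negbTE (neq_lift _ _)). Qed.

Lemma tail_sum_setfirst F m : tail_sum (setfirst F m) = tail_sum F.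
Proof. by apply: eq_bigr => j _; rewrite setfirst_lift. Qed.

Lemma dsum_setfirst F m : dsum (setfirst F m) = dsum F.
Proof. by apply: eq_bigr => j _; rewrite setfirst_lift. Qed.

Variable s : nat.
Local Notation L := (ordS g s).
Local Notation a := (adj g s).

Definition max_facts : {set {ffun 'I_t.+1 -> 'I_s.+1}} :=
  [set c in facts g s | flen c == L].

Definition short_Dfacts : {set {ffun 'I_t.+1 -> 'I_a.+1}} :=
  [set x in facts (Dgens g) a | flen x <= L].

Definition shorten (c : {ffun 'I_t.+1 -> 'I_s.+1}) : 'I_t.+1 -> nat :=
  setfirst (fun i => c i) 0.

Definition lengthen (x : {ffun 'I_t.+1 -> 'I_a.+1}) : 'I_t.+1 -> nat :=
  setfirst (fun i => x i) (L + x ord0 - tail_sum (fun i => x i)).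

Definition to_Dfact (c : {ffun 'I_t.+1 -> 'I_s.+1}) : {ffun 'I_t.+1 -> 'I_a.+1} :=
  ffun_of a (shorten c).

Definition of_Dfact (x : {ffun 'I_t.+1 -> 'I_a.+1}) : {ffun 'I_t.+1 -> 'I_s.+1} :=
  ffun_of s (lengthen x).

Lemma shorten_fact c : c \in max_facts ->
  \sum_(i < t.+1) shorten c i * Dgens g i = a /\
  \sum_(i < t.+1) shorten c i = L - c ord0.
Proof.
rewrite !inE => /andP [/eqP c_fact /eqP c_len]; split.
  by rewrite sum_DgensE dsum_setfirst (dsum_fact c_fact) -/(flen c) c_len.
by rewrite sum_first_tail tail_sum_setfirst -c_len /flen sum_first_tail addKn.
Qed.

Lemma lengthen_fact x : x \in short_Dfacts ->
  \sum_(i < t.+1) lengthen x i * g i = s /\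
  \sum_(i < t.+1) lengthen x i = L + x ord0.
Proof.
rewrite !inE => /andP [/eqP x_fact x_len].
rewrite sum_DgensE /adj in x_fact; rewrite /flen sum_first_tail in x_len.
have len : \sum_(i < t.+1) lengthen x i = L + x ord0.
  by rewrite sum_first_tail tail_sum_setfirst /lengthen /setfirst eqxx subnK //; lia.
split=> //; rewrite sum_gensE len dsum_setfirst mulnDl -addnA x_fact.
exact/subnKC/ordS_mul_le.
Qed.

Lemma to_Dfact_val c : c \in max_facts -> forall i, to_Dfact c i = shorten c i :> nat.
Proof.
by case/shorten_fact=> c_fact _ i; rewrite /to_Dfact (ffun_of_fact Dgens_gt0 c_fact).
Qed.

Lemma of_Dfact_val x : x \in short_Dfacts -> forall i, of_Dfact x i = lengthen x i :> nat.
Proof.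
by case/lengthen_fact=> x_fact _ i; rewrite /of_Dfact (ffun_of_fact gen_gt0 x_fact).
Qed.

Lemma to_Dfact_in c : c \in max_facts -> to_Dfact c \in short_Dfacts.
Proof.
move=> c_in; have [c_fact c_len] := shorten_fact c_in.
rewrite inE /to_Dfact (ffun_of_facts Dgens_gt0 c_fact).
by rewrite (flen_ffun_of Dgens_gt0 c_fact) c_len leq_subr.
Qed.

Lemma short_Dfact_first0 x : x \in short_Dfacts -> x ord0 = 0 :> nat.
Proof.
case/lengthen_fact=> x_fact x_len; apply/eqP.
have := flen_le_ordS (ffun_of_facts gen_gt0 x_fact).
by rewrite (flen_ffun_of gen_gt0 x_fact) x_len -{2}[L]addn0 leq_add2l leqn0.
Qed.

Lemma of_Dfact_in x : x \in short_Dfacts -> of_Dfact x \in max_facts.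
Proof.
move=> x_in; have [x_fact x_len] := lengthen_fact x_in.
rewrite inE /of_Dfact (ffun_of_facts gen_gt0 x_fact) (flen_ffun_of gen_gt0 x_fact).
by rewrite x_len (short_Dfact_first0 x_in) addn0 eqxx.
Qed.

Lemma to_DfactK : {in max_facts, cancel to_Dfact of_Dfact}.
Proof.
move=> c c_in; apply/ffunP=> i; apply/val_inj => /=.
rewrite of_Dfact_val ?to_Dfact_in // /lengthen.
case: (unliftP ord0 i) => [j ->|->].
  by rewrite !setfirst_lift to_Dfact_val // setfirst_lift.
have := c_in; rewrite inE /flen sum_first_tail => /andP [_ /eqP <-].
rewrite (eq_tail_sum (to_Dfact_val c_in)) to_Dfact_val // tail_sum_setfirst.
by rewrite /setfirst eqxx addn0 addnK.
Qed.

Lemma of_DfactK : {in short_Dfacts, cancel of_Dfact to_Dfact}.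
Proof.
move=> x x_in; apply/ffunP=> i; apply/val_inj => /=.
rewrite to_Dfact_val ?of_Dfact_in // /shorten.
case: (unliftP ord0 i) => [j ->|->].
  by rewrite !setfirst_lift of_Dfact_val // setfirst_lift.
by rewrite /setfirst eqxx short_Dfact_first0.
Qed.

Lemma card_max_facts : #|max_facts| = #|short_Dfacts|.
Proof.
suff -> : short_Dfacts = to_Dfact @: max_facts.
  by rewrite card_in_imset //; apply: can_in_inj to_DfactK.
apply/setP=> x; apply/idP/imsetP => [x_in|[c c_in ->]]; last exact: to_Dfact_in.
by exists (of_Dfact x); rewrite ?of_Dfact_in ?of_DfactK.
Qed.

End Shift.

Theorem proposition3p3 (t : nat) (g : 'I_t.+1 -> nat)
  (hS : min_gens_numsg g) (s : nat) (hs : in_sg g s) :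
  dmax g s = countBD g s.
Proof.
have [e_gt0 g_incr _ _] := hS.
have e_lt_gen (j : 'I_t) : g ord0 < g (lift ord0 j) by apply: g_incr.
exact: (card_max_facts e_gt0 e_lt_gen s).
Qed.
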